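(* For every positive integer $n\neq 2$, there is no continuous bijection from $\mathbb{R}^n$ onto $\mathbb{R}^2$.
   Context: $\mathbb{R}^n$ and $\mathbb{R}^2$ carry their usual Euclidean topologies. *)

From Stdlib Require Import Reals.
From Stdlib Require Vectors.Fin.
Open Scope R_scope.

Definition Rn (n : nat) : Type := Fin.t n -> R.

Fixpoint fin_sum (n : nat) : (Fin.t n -> R) -> R :=
  match n with
  | O => fun _ => 0
  | S m => fun f => f Fin.F1 + fin_sum m (fun i => f (Fin.FS i))
  end.

Definition euclid_dist (n : nat) (x y : Rn n) : R :=
  sqrt (fin_sum n (fun i => (x i - y i) ^ 2)).

Definition continuous_Rn (n m : nat) (f : Rn n -> Rn m) : Prop :=
  forall x : Rn n, forall eps : R, eps > 0 ->
    exists delta : R, delta > 0 /\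
      forall y : Rn n, euclid_dist n x y < delta ->
        euclid_dist m (f x) (f y) < eps.

Definition bijective_map {A B : Type} (f : A -> B) : Prop :=
  (forall a1 a2, f a1 = f a2 -> a1 = a2) /\ (forall b, exists a, f a = b).

From Stdlib Require Import Reals Lra Lia Psatz ZArith Classical ClassicalEpsilon FunctionalExtensionality.
Open Scope R_scope.

(* For n >= 3, compose a continuous injection f : R^n -> R^2 with the upper and lower
   hemispheres over the square [-1,1]^2, i.e. the graphs of +-(1-a^2)(1-b^2) in the first three
   coordinates. The difference h(a,b) = f(upper(a,b)) - f(lower(a,b)) is odd on the boundary of
   the square, so it has a zero by a discrete Borsuk-Ulam argument, contradicting injectivity.
   For that argument, label a fine grid by the quadrant containing h: by uniform continuity
   neighbouring labels never differ by a half turn, the quarter turns around each grid cell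
   cancel, yet oddness forces the turns along half of the boundary to total 2 modulo 4.

   For n = 1, Baire's theorem applied to the compact arcs f([-k,k]) covering the plane yields
   an open square inside one of them, on which f^-1 is continuous. Then
   t |-> f^-1(c + rho e^{it}) - f^-1(c - rho e^{it}) changes sign on [0, pi], and its zero
   contradicts injectivity of f^-1. *)

Lemma Rabs_le_inv x a : Rabs x <= a -> -a <= x <= a.
Proof. unfold Rabs; destruct (Rcase_abs x); lra. Qed.

Lemma Rabs_lt_inv x a : Rabs x < a -> -a < x < a.
Proof. unfold Rabs; destruct (Rcase_abs x); lra. Qed.

(** * Nested squares *)

Lemma nested_intervals_common_point (c r : nat -> R) :
  (forall k, 0 <= r k) -> (forall k, Rabs (c (S k) - c k) + r (S k) <= r k) ->
  exists p, forall k, Rabs (p - c k) <= r k.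
Proof.
  intros Hr Hnest.
  assert (Hmono : forall m k, (m <= k)%nat -> c m - r m <= c k - r k /\ c k + r k <= c m + r m).
  { intros m k Hmk; induction Hmk as [|k _ IH]; [lra|].
    pose proof (Rabs_le_inv (c (S k) - c k) (r k - r (S k)) ltac:(specialize (Hnest k); lra)).
    lra. }
  assert (Hle : forall m k, c m - r m <= c k + r k).
  { intros m k. destruct (Hmono m (max m k) ltac:(lia)) as [Hm _].
    destruct (Hmono k (max m k) ltac:(lia)) as [_ Hk]. specialize (Hr (max m k)). lra. }
  destruct (completeness (fun x => exists k, x = c k - r k)) as [p [Hub Hlub]].
  - exists (c O + r O). intros x [k ->]. apply Hle.
  - exists (c O - r O). eauto.
  - exists p. intros k. apply Rabs_le.
    assert (c k - r k <= p) by (apply Hub; eauto).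
    assert (p <= c k + r k) by (apply Hlub; intros x [m ->]; apply Hle).
    lra.
Qed.

Lemma shrinking_squares_common_point (Bad : nat -> R -> R -> R -> Prop) c1 c2 r :
  r > 0 -> Bad O c1 c2 r ->
  (forall k c1 c2 r, r > 0 -> Bad k c1 c2 r -> exists c1' c2' r',
     0 < r' <= r / 2 /\ Rabs (c1' - c1) + r' <= r /\ Rabs (c2' - c2) + r' <= r /\
     Bad (S k) c1' c2' r') ->
  exists p1 p2, Rabs (p1 - c1) <= r /\ Rabs (p2 - c2) <= r /\
    forall k, exists c1 c2 r', Bad k c1 c2 r' /\ 0 < r' <= r * (/ 2) ^ k /\
      Rabs (p1 - c1) <= r' /\ Rabs (p2 - c2) <= r'.
Proof.
  intros Hr Hbad0 Hstep.
  set (Good (k : nat) (s : R * R * R) := snd s > 0 /\ Bad k (fst (fst s)) (snd (fst s)) (snd s)).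
  set (Inside (s s' : R * R * R) := snd s' <= snd s / 2 /\
     Rabs (fst (fst s') - fst (fst s)) + snd s' <= snd s /\
     Rabs (snd (fst s') - snd (fst s)) + snd s' <= snd s).
  assert (Hex : forall x : nat * (R * R * R), exists s',
    Good (fst x) (snd x) -> Good (S (fst x)) s' /\ Inside (snd x) s').
  { intros [k [[a b] rr]]. destruct (classic (Good k (a, b, rr))) as [[h1 h2]|h].
    - destruct (Hstep k a b rr h1 h2) as [a' [b' [r' H]]].
      exists (a', b', r'). unfold Good, Inside; simpl; intros; tauto.
    - exists (0, 0, 0). simpl; tauto. }
  destruct (choice _ Hex) as [next Hnext].
  set (sq := fix sq (k : nat) : R * R * R :=
    match k with O => (c1, c2, r) | S k => next (k, sq k) end).
  assert (Hgood : forall k, Good k (sq k)).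
  { induction k as [|k IH]; [split; simpl; auto|]. exact (proj1 (Hnext (k, sq k) IH)). }
  assert (Hin : forall k, Inside (sq k) (sq (S k)))
    by (intro k; exact (proj2 (Hnext (k, sq k) (Hgood k)))).
  assert (Hpos : forall k, 0 <= snd (sq k)) by (intro k; destruct (Hgood k); lra).
  destruct (nested_intervals_common_point (fun k => fst (fst (sq k))) (fun k => snd (sq k)) Hpos)
    as [p1 Hp1]; [intro k; apply (Hin k)|].
  destruct (nested_intervals_common_point (fun k => snd (fst (sq k))) (fun k => snd (sq k)) Hpos)
    as [p2 Hp2]; [intro k; apply (Hin k)|].
  assert (Hrad : forall k, snd (sq k) <= r * (/ 2) ^ k).
  { induction k as [|k IH]; [simpl; lra|]. destruct (Hin k) as [Hhalf _]. simpl pow. lra. }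
  exists p1, p2. split; [exact (Hp1 O)|split; [exact (Hp2 O)|]].
  intro k. exists (fst (fst (sq k))), (snd (fst (sq k))), (snd (sq k)).
  destruct (Hgood k). repeat split; auto.
Qed.

Lemma square_local_to_global (P : R -> R -> R -> Prop) c1 c2 r :
  r > 0 ->
  (forall c1 c2 r, r > 0 ->
     P (c1 - r/2) (c2 - r/2) (r/2) -> P (c1 + r/2) (c2 - r/2) (r/2) ->
     P (c1 - r/2) (c2 + r/2) (r/2) -> P (c1 + r/2) (c2 + r/2) (r/2) -> P c1 c2 r) ->
  (forall p1 p2, Rabs (p1 - c1) <= r -> Rabs (p2 - c2) <= r -> exists rho, rho > 0 /\
     forall d1 d2 s, 0 < s < rho -> Rabs (p1 - d1) <= s -> Rabs (p2 - d2) <= s -> P d1 d2 s) ->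
  P c1 c2 r.
Proof.
  intros Hr Hsplit Hloc. apply NNPP; intro HP.
  destruct (shrinking_squares_common_point (fun _ d1 d2 s => ~ P d1 d2 s) c1 c2 r Hr HP)
    as [p1 [p2 [Hp1 [Hp2 Hp]]]].
  - intros _ d1 d2 s Hs HPs.
    assert (Hquarter : forall x, x = s/2 \/ x = -(s/2) -> Rabs x + s/2 <= s).
    { intros x [->| ->]; [rewrite Rabs_right|rewrite Rabs_Ropp, Rabs_right]; lra. }
    assert (Hbad : ~ P (d1 - s/2) (d2 - s/2) (s/2) \/ ~ P (d1 + s/2) (d2 - s/2) (s/2) \/
                   ~ P (d1 - s/2) (d2 + s/2) (s/2) \/ ~ P (d1 + s/2) (d2 + s/2) (s/2)).
    { apply NNPP; intro H; apply HPs, Hsplit; auto; apply NNPP; tauto. }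
    destruct Hbad as [H|[H|[H|H]]]; eexists _, _, (s/2);
      (split; [lra|split; [|split; [|exact H]]]); apply Hquarter;
      first [left; ring | right; ring].
  - destruct (Hloc p1 p2 Hp1 Hp2) as [rho [Hrho Hsmall]].
    destruct (pow_lt_1_zero (/2) ltac:(rewrite Rabs_right; lra) (rho / r)) as [N HN].
    { apply Rdiv_lt_0_compat; lra. }
    specialize (HN N (Nat.le_refl _)). rewrite Rabs_right in HN by (apply Rle_ge, pow_le; lra).
    destruct (Hp N) as [d1 [d2 [s [HPs [Hs [Hd1 Hd2]]]]]].
    apply HPs, Hsmall; auto. split; [lra|].
    apply (Rmult_lt_compat_l r) in HN; [|lra].
    replace (r * (rho / r)) with rho in HN by (field; lra). lra.
Qed.

(** * Winding of a quadrant labelling of a grid *)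

Section QuarterTurns.
Local Open Scope Z_scope.

(* A half turn has no sign and counts as 0; the grid hypotheses below rule it out. *)
Definition quarter_turn (a b : Z) : Z :=
  match (b - a) mod 4 with 1 => 1 | 3 => -1 | _ => 0 end.

Definition quadrant_label (a : Z) : Prop := a = 0 \/ a = 1 \/ a = 2 \/ a = 3.

Local Ltac by_cases := repeat match goal with
  | H : quadrant_label _ |- _ => destruct H as [H|[H|[H|H]]]; subst end;
  vm_compute in *; first [reflexivity | congruence | lia | tauto].

Lemma quarter_turn_anti a b : quadrant_label a -> quadrant_label b -> (b - a) mod 4 <> 2 ->
  quarter_turn b a = - quarter_turn a b.
Proof. intros; by_cases. Qed.

Lemma quarter_turn_mod4 a b : quadrant_label a -> quadrant_label b -> (b - a) mod 4 <> 2 ->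
  (4 | quarter_turn a b - (b - a)).
Proof. intros; apply Z.mod_divide; [lia|]; by_cases. Qed.

Lemma quarter_turn_antipodal a b : quadrant_label a -> quadrant_label b ->
  quarter_turn ((a + 2) mod 4) ((b + 2) mod 4) = quarter_turn a b.
Proof. intros; by_cases. Qed.

Lemma quarter_turn_cycle a b c d :
  quadrant_label a -> quadrant_label b -> quadrant_label c -> quadrant_label d ->
  (b - a) mod 4 <> 2 -> (c - b) mod 4 <> 2 -> (d - c) mod 4 <> 2 -> (a - d) mod 4 <> 2 ->
  (c - a) mod 4 <> 2 -> (d - b) mod 4 <> 2 ->
  quarter_turn a b + quarter_turn b c + quarter_turn c d + quarter_turn d a = 0.
Proof. intros; by_cases. Qed.

Fixpoint zsum (n : nat) (f : nat -> Z) : Z :=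
  match n with O => 0 | S n => zsum n f + f n end.

Lemma zsum_ext n f g : (forall i, (i < n)%nat -> f i = g i) -> zsum n f = zsum n g.
Proof.
  induction n as [|n IH]; simpl; intros H; auto.
  rewrite IH by (intros; apply H; lia). rewrite H by lia. reflexivity.
Qed.

Lemma zsum_zero n : zsum n (fun _ => 0) = 0.
Proof. induction n; simpl; lia. Qed.

Lemma zsum_add n f g : zsum n (fun i => f i + g i) = zsum n f + zsum n g.
Proof. induction n; simpl; lia. Qed.

Lemma zsum_opp n f : zsum n (fun i => - f i) = - zsum n f.
Proof. induction n; simpl; lia. Qed.

Lemma zsum_sub n f g : zsum n (fun i => f i - g i) = zsum n f - zsum n g.
Proof. induction n; simpl; lia. Qed.

Lemma zsum_telescope n g : zsum n (fun i => g (S i) - g i) = g n - g O.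
Proof. induction n; simpl; lia. Qed.

Lemma zsum_shift n f : zsum (S n) f = f O + zsum n (fun i => f (S i)).
Proof. induction n as [|n IH]; simpl in *; [lia|]. rewrite IH. lia. Qed.

Lemma zsum_rev n f : zsum n (fun i => f (n - 1 - i)%nat) = zsum n f.
Proof.
  revert f; induction n as [|n IH]; intros f; [reflexivity|].
  rewrite (zsum_shift n f), <- (IH (fun k => f (S k))).
  change (zsum n (fun i => f (S n - 1 - i)%nat) + f (S n - 1 - n)%nat =
          f O + zsum n (fun i => f (S (n - 1 - i)))).
  replace (S n - 1 - n)%nat with O by lia.
  rewrite (zsum_ext n _ (fun i => f (S (n - 1 - i)))) by (intros; f_equal; lia).
  lia.
Qed.

Lemma zsum_divide_telescope d n f (a : nat -> Z) :
  (forall i, (i < n)%nat -> (d | f i - (a (S i) - a i))) -> (d | zsum n f - (a n - a O)).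
Proof.
  induction n as [|n IH]; simpl; intros H.
  - exists 0; ring.
  - replace (zsum n f + f n - (a (S n) - a O))
      with ((zsum n f - (a n - a O)) + (f n - (a (S n) - a n))) by ring.
    apply Z.divide_add_r; [apply IH; intros; apply H|apply H]; lia.
Qed.

Section Grid.
Variable N : nat.
Variable label : nat -> nat -> Z.
Hypothesis label_quadrant : forall i j, quadrant_label (label i j).
Hypothesis label_adjacent : forall i j i' j', (i <= N)%nat -> (j <= N)%nat ->
  (i' <= N)%nat -> (j' <= N)%nat -> (i' <= S i)%nat -> (i <= S i')%nat ->
  (j' <= S j)%nat -> (j <= S j')%nat -> (label i' j' - label i j) mod 4 <> 2.
Hypothesis label_boundary_antipodal : forall i j, (i <= N)%nat -> (j <= N)%nat ->
  (i = O \/ i = N \/ j = O \/ j = N) -> label (N - i) (N - j) = (label i j + 2) mod 4.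

Let hturn i j := quarter_turn (label i j) (label (S i) j).
Let vturn i j := quarter_turn (label i j) (label i (S j)).

Lemma cell_turns i j : (i < N)%nat -> (j < N)%nat ->
  hturn i j + vturn (S i) j - hturn i (S j) - vturn i j = 0.
Proof.
  intros Hi Hj. unfold hturn, vturn.
  pose proof (quarter_turn_cycle (label i j) (label (S i) j) (label (S i) (S j)) (label i (S j)))
    as Hcycle.
  rewrite (quarter_turn_anti (label i (S j)) (label (S i) (S j))),
    (quarter_turn_anti (label i j) (label i (S j))) in Hcycle; auto; try (apply label_adjacent; lia).
  rewrite <- Hcycle; auto; apply label_adjacent; lia.
Qed.

Lemma boundary_turns_zero :
  zsum N (fun i => hturn i O) + zsum N (fun j => vturn N j)
  - zsum N (fun i => hturn i N) - zsum N (fun j => vturn O j) = 0.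
Proof.
  assert (Hrow : forall j, (j < N)%nat ->
    zsum N (fun i => hturn i j) - zsum N (fun i => hturn i (S j)) + (vturn N j - vturn O j) = 0).
  { intros j Hj. rewrite <- (zsum_telescope N (fun i => vturn i j)), <- zsum_sub, <- !zsum_add.
    rewrite (zsum_ext N _ (fun _ => 0)) by (intros i Hi; pose proof (cell_turns i j Hi Hj); lia).
    apply zsum_zero. }
  assert (Hrows : zsum N (fun j => (zsum N (fun i => hturn i j) - zsum N (fun i => hturn i (S j)))
                                  + (vturn N j - vturn O j)) = 0)
    by (rewrite (zsum_ext _ _ _ Hrow); apply zsum_zero).
  assert (Hcols : zsum N (fun j => zsum N (fun i => hturn i j) - zsum N (fun i => hturn i (S j)))
                  = zsum N (fun i => hturn i O) - zsum N (fun i => hturn i N)).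
  { transitivity (- zsum N (fun j => zsum N (fun i => hturn i (S j)) - zsum N (fun i => hturn i j))).
    - rewrite <- zsum_opp. apply zsum_ext; intros; lia.
    - rewrite (zsum_telescope N (fun j => zsum N (fun i => hturn i j))). lia. }
  rewrite zsum_add, Hcols, zsum_sub in Hrows.
  change (zsum N (vturn N)) with (zsum N (fun j => vturn N j)) in Hrows.
  change (zsum N (vturn O)) with (zsum N (fun j => vturn O j)) in Hrows.
  lia.
Qed.

Lemma top_turns_antipodal : zsum N (fun i => hturn i N) = - zsum N (fun i => hturn i O).
Proof.
  rewrite <- zsum_opp, <- (zsum_rev N (fun i => - hturn i O)). apply zsum_ext. intros i Hi.
  unfold hturn.
  replace (label i N) with ((label (N - i) O + 2) mod 4)
    by (rewrite <- label_boundary_antipodal by lia; f_equal; lia).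
  replace (label (S i) N) with ((label (N - S i) O + 2) mod 4)
    by (rewrite <- label_boundary_antipodal by lia; f_equal; lia).
  rewrite quarter_turn_antipodal by auto.
  replace (N - i)%nat with (S (N - 1 - i)) by lia. replace (N - S i)%nat with (N - 1 - i)%nat by lia.
  rewrite quarter_turn_anti; auto. apply label_adjacent; lia.
Qed.

Lemma left_turns_antipodal : zsum N (fun j => vturn O j) = - zsum N (fun j => vturn N j).
Proof.
  rewrite <- zsum_opp, <- (zsum_rev N (fun j => - vturn N j)). apply zsum_ext. intros j Hj.
  unfold vturn.
  replace (label O j) with ((label N (N - j) + 2) mod 4)
    by (rewrite <- label_boundary_antipodal by lia; f_equal; lia).
  replace (label O (S j)) with ((label N (N - S j) + 2) mod 4)
    by (rewrite <- label_boundary_antipodal by lia; f_equal; lia).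
  rewrite quarter_turn_antipodal by auto.
  replace (N - j)%nat with (S (N - 1 - j)) by lia. replace (N - S j)%nat with (N - 1 - j)%nat by lia.
  rewrite quarter_turn_anti; auto. apply label_adjacent; lia.
Qed.

Lemma antipodal_grid_labelling_impossible : False.
Proof.
  assert (Hhalf : zsum N (fun i => hturn i O) + zsum N (fun j => vturn N j) = 0)
    by (pose proof boundary_turns_zero; pose proof top_turns_antipodal;
        pose proof left_turns_antipodal; lia).
  destruct (zsum_divide_telescope 4 N (fun i => hturn i O) (fun i => label i O)) as [k1 Hk1].
  { intros; unfold hturn; apply quarter_turn_mod4; auto; apply label_adjacent; lia. }
  destruct (zsum_divide_telescope 4 N (fun j => vturn N j) (fun j => label N j)) as [k2 Hk2].
  { intros; unfold vturn; apply quarter_turn_mod4; auto; apply label_adjacent; lia. }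
  pose proof (label_boundary_antipodal O O ltac:(lia) ltac:(lia) ltac:(lia)) as Hcorner.
  rewrite Nat.sub_0_r in Hcorner.
  destruct (label_quadrant O O) as [X|[X|[X|X]]]; rewrite X in Hcorner; vm_compute in Hcorner; lia.
Qed.
End Grid.
End QuarterTurns.
(** * A Borsuk-Ulam theorem for the square *)

(* Half-open quadrants numbered counterclockwise; the origin gets the junk label 0. *)
Definition quadrant (x y : R) : Z :=
  if Rlt_dec 0 x then (if Rle_dec 0 y then 0%Z else 3%Z)
  else if Rlt_dec 0 y then 1%Z
  else if Rlt_dec x 0 then 2%Z
  else if Rlt_dec y 0 then 3%Z else 0%Z.

Lemma quadrant_label_quadrant x y : quadrant_label (quadrant x y).
Proof. unfold quadrant, quadrant_label. repeat (destruct Rlt_dec || destruct Rle_dec); auto. Qed.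

Lemma quadrant_opp x y : (x <> 0 \/ y <> 0) -> quadrant (-x) (-y) = ((quadrant x y + 2) mod 4)%Z.
Proof.
  intros Hn. unfold quadrant.
  repeat (destruct Rlt_dec || destruct Rle_dec); vm_compute; try reflexivity; exfalso; lra.
Qed.

Lemma opposite_quadrants_dot_nonpos x y u v : (x <> 0 \/ y <> 0) -> (u <> 0 \/ v <> 0) ->
  ((quadrant u v - quadrant x y) mod 4 = 2)%Z -> x * u + y * v <= 0.
Proof.
  intros Hn Hm. unfold quadrant.
  repeat (destruct Rlt_dec || destruct Rle_dec); vm_compute; intro E; try discriminate; nra.
Qed.

Lemma near_vectors_dot_pos p1 p2 u1 u2 v1 v2 M : M = Rmax (Rabs p1) (Rabs p2) -> M > 0 ->
  Rabs (u1 - p1) < M/8 -> Rabs (u2 - p2) < M/8 -> Rabs (v1 - p1) < M/8 -> Rabs (v2 - p2) < M/8 ->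
  u1 * v1 + u2 * v2 > 0.
Proof.
  intros HM HMp H1 H2 H3 H4.
  apply Rabs_lt_inv in H1, H2, H3, H4.
  unfold Rmax, Rabs in HM; repeat destruct Rcase_abs in HM; destruct Rle_dec in HM; subst M;
  set (e1 := u1 - p1) in *; set (e2 := u2 - p2) in *; set (f1 := v1 - p1) in *; set (f2 := v2 - p2) in *;
  replace u1 with (p1 + e1) by (unfold e1; ring); replace u2 with (p2 + e2) by (unfold e2; ring);
  replace v1 with (p1 + f1) by (unfold f1; ring); replace v2 with (p2 + f2) by (unfold f2; ring);
  clearbody e1 e2 f1 f2; nra.
Qed.

Definition in_square (a b : R) : Prop := -1 <= a <= 1 /\ -1 <= b <= 1.

Section CoherentSquareMap.
Variables h1 h2 : R -> R -> R.
Hypothesis h_continuous : forall a b, in_square a b -> forall eps, eps > 0 -> exists del, del > 0 /\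
  forall a' b', in_square a' b' -> Rabs (a' - a) < del -> Rabs (b' - b) < del ->
    Rabs (h1 a' b' - h1 a b) < eps /\ Rabs (h2 a' b' - h2 a b) < eps.
Hypothesis h_nonzero : forall a b, in_square a b -> h1 a b <> 0 \/ h2 a b <> 0.

Let coherent_on (c1 c2 r : R) : Prop := exists del, del > 0 /\
  forall a b a' b', in_square a b -> in_square a' b' -> Rabs (a - c1) <= r -> Rabs (b - c2) <= r ->
    Rabs (a' - a) < del -> Rabs (b' - b) < del -> h1 a b * h1 a' b' + h2 a b * h2 a' b' > 0.

Lemma coherent_on_split c1 c2 r : r > 0 ->
  coherent_on (c1 - r/2) (c2 - r/2) (r/2) -> coherent_on (c1 + r/2) (c2 - r/2) (r/2) ->
  coherent_on (c1 - r/2) (c2 + r/2) (r/2) -> coherent_on (c1 + r/2) (c2 + r/2) (r/2) ->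
  coherent_on c1 c2 r.
Proof.
  intros Hr [d1 [D1 K1]] [d2 [D2 K2]] [d3 [D3 K3]] [d4 [D4 K4]].
  exists (Rmin (Rmin d1 d2) (Rmin d3 d4)). split; [repeat apply Rmin_glb_lt; auto|].
  intros a b a' b' Qa Qb Ha Hb Ha' Hb'.
  pose proof (Rmin_l (Rmin d1 d2) (Rmin d3 d4)); pose proof (Rmin_r (Rmin d1 d2) (Rmin d3 d4)).
  pose proof (Rmin_l d1 d2); pose proof (Rmin_r d1 d2).
  pose proof (Rmin_l d3 d4); pose proof (Rmin_r d3 d4).
  apply Rabs_le_inv in Ha, Hb.
  destruct (Rle_dec a c1); destruct (Rle_dec b c2);
    [apply K1|apply K3|apply K2|apply K4]; auto; try apply Rabs_le; lra.
Qed.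

Lemma coherent_on_near p1 p2 : in_square p1 p2 -> exists rho, rho > 0 /\
  forall c1 c2 r, 0 < r < rho -> Rabs (p1 - c1) <= r -> Rabs (p2 - c2) <= r -> coherent_on c1 c2 r.
Proof.
  intros Hp. set (M := Rmax (Rabs (h1 p1 p2)) (Rabs (h2 p1 p2))).
  assert (HM : M > 0).
  { unfold M. destruct (h_nonzero p1 p2 Hp) as [n|n]; apply Rabs_pos_lt in n;
    [eapply Rlt_le_trans; [|apply Rmax_l] | eapply Rlt_le_trans; [|apply Rmax_r]]; exact n. }
  destruct (h_continuous p1 p2 Hp (M/8) ltac:(lra)) as [d [Hd Hnear]].
  exists (d/4). split; [lra|].
  intros c1 c2 r Hr Hc1 Hc2. exists (d/4). split; [lra|].
  intros a b a' b' Qa Qb Ha Hb Ha' Hb'.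
  apply Rabs_le_inv in Hc1, Hc2, Ha, Hb. apply Rabs_lt_inv in Ha', Hb'.
  destruct (Hnear a b Qa) as [k1 k2]; try (apply Rabs_def1; lra).
  destruct (Hnear a' b' Qb) as [k3 k4]; try (apply Rabs_def1; lra).
  eapply near_vectors_dot_pos; eauto.
Qed.

Lemma square_map_coherent : exists del, del > 0 /\ forall a b a' b', in_square a b -> in_square a' b' ->
  Rabs (a' - a) < del -> Rabs (b' - b) < del -> h1 a b * h1 a' b' + h2 a b * h2 a' b' > 0.
Proof.
  destruct (square_local_to_global coherent_on 0 0 1 ltac:(lra) coherent_on_split)
    as [del [Hdel Hcoh]].
  - intros p1 p2 Hp1 Hp2. apply coherent_on_near.
    rewrite Rminus_0_r in Hp1, Hp2. apply Rabs_le_inv in Hp1, Hp2. split; lra.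
  - exists del. split; auto. intros a b a' b' Qa Qb.
    apply Hcoh; auto; rewrite Rminus_0_r; destruct Qa; apply Rabs_le; lra.
Qed.
End CoherentSquareMap.

Definition grid_point (N i : nat) : R := -1 + 2 * INR i / INR N.

Lemma grid_point_bounds N i : (0 < N)%nat -> (i <= N)%nat -> -1 <= grid_point N i <= 1.
Proof.
  intros HN Hi. apply lt_0_INR in HN. apply le_INR in Hi. pose proof (pos_INR i).
  unfold grid_point. split.
  - assert (0 <= 2 * INR i / INR N) by (apply Rmult_le_pos; [lra|left; apply Rinv_0_lt_compat; lra]).
    lra.
  - assert (2 * INR i / INR N <= 2); [|lra].
    apply (Rmult_le_reg_r (INR N)); auto. unfold Rdiv. rewrite Rmult_assoc, Rinv_l; lra.
Qed.

Lemma grid_point_step N i i' : (0 < N)%nat -> (i' <= S i)%nat -> (i <= S i')%nat ->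
  Rabs (grid_point N i' - grid_point N i) <= 2 / INR N.
Proof.
  intros HN H1 H2. apply lt_0_INR in HN. apply le_INR in H1, H2. rewrite S_INR in H1, H2.
  unfold grid_point.
  replace (-1 + 2 * INR i' / INR N - (-1 + 2 * INR i / INR N))
    with ((INR i' - INR i) * (2 / INR N)) by (field; lra).
  rewrite Rabs_mult, (Rabs_right (2 / INR N))
    by (apply Rle_ge, Rmult_le_pos; [lra|left; apply Rinv_0_lt_compat; lra]).
  rewrite <- (Rmult_1_l (2 / INR N)) at 2. apply Rmult_le_compat_r.
  - apply Rmult_le_pos; [lra|left; apply Rinv_0_lt_compat; lra].
  - apply Rabs_le; lra.
Qed.

Lemma grid_point_reflect N i : (0 < N)%nat -> (i <= N)%nat -> grid_point N (N - i) = - grid_point N i.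
Proof.
  intros HN Hi. apply lt_0_INR in HN. unfold grid_point. rewrite minus_INR by auto. field. lra.
Qed.

Lemma grid_point_boundary N i : (0 < N)%nat -> (i = O \/ i = N) ->
  grid_point N i = -1 \/ grid_point N i = 1.
Proof.
  intros HN [->| ->]; apply lt_0_INR in HN; unfold grid_point; [left|right]; simpl; field; lra.
Qed.

Lemma borsuk_ulam_square (h1 h2 : R -> R -> R) :
  (forall a b, in_square a b -> forall eps, eps > 0 -> exists del, del > 0 /\
    forall a' b', in_square a' b' -> Rabs (a' - a) < del -> Rabs (b' - b) < del ->
      Rabs (h1 a' b' - h1 a b) < eps /\ Rabs (h2 a' b' - h2 a b) < eps) ->
  (forall a b, in_square a b -> (a = -1 \/ a = 1 \/ b = -1 \/ b = 1) ->
     h1 (-a) (-b) = - h1 a b /\ h2 (-a) (-b) = - h2 a b) ->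
  exists a b, in_square a b /\ h1 a b = 0 /\ h2 a b = 0.
Proof.
  intros Hcont Hodd. apply NNPP; intro Hzero.
  assert (Hnz : forall a b, in_square a b -> h1 a b <> 0 \/ h2 a b <> 0).
  { intros a b Hab. apply NNPP; intros [H1 H2]%not_or_and.
    apply Hzero. exists a, b. split; [auto|split; apply NNPP; auto]. }
  destruct (square_map_coherent h1 h2 Hcont Hnz) as [del [Hdel Hcoh]].
  destruct (archimed_cor1 (del/2) ltac:(lra)) as [N [Hfine HN]].
  set (x := grid_point N).
  assert (Hin : forall i j, (i <= N)%nat -> (j <= N)%nat -> in_square (x i) (x j))
    by (split; apply grid_point_bounds; auto).
  assert (Hmesh : forall i i', (i' <= S i)%nat -> (i <= S i')%nat -> Rabs (x i' - x i) < del)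
    by (intros; eapply Rle_lt_trans; [apply grid_point_step; auto|unfold Rdiv; lra]).
  apply (antipodal_grid_labelling_impossible N (fun i j => quadrant (h1 (x i) (x j)) (h2 (x i) (x j)))).
  - intros; apply quadrant_label_quadrant.
  - intros i j i' j' Hi Hj Hi' Hj' H1 H2 H3 H4 E.
    apply opposite_quadrants_dot_nonpos in E; try apply Hnz; auto.
    pose proof (Hcoh _ _ _ _ (Hin i j Hi Hj) (Hin i' j' Hi' Hj') (Hmesh _ _ H1 H2) (Hmesh _ _ H3 H4)).
    lra.
  - intros i j Hi Hj Hb.
    replace (x (N - i)%nat) with (- x i) by (symmetry; apply grid_point_reflect; auto).
    replace (x (N - j)%nat) with (- x j) by (symmetry; apply grid_point_reflect; auto).
    destruct (Hodd (x i) (x j) (Hin i j Hi Hj)) as [E1 E2].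
    { destruct Hb as [Hb|[Hb|Hb]]; [destruct (grid_point_boundary N i HN (or_introl Hb))
      | destruct (grid_point_boundary N i HN (or_intror Hb))
      | destruct (grid_point_boundary N j HN Hb)]; tauto. }
    rewrite E1, E2. apply quadrant_opp, Hnz; auto.
Qed.

(** * Dimension at least three *)

Definition vcons {m} (x : R) (g : Fin.t m -> R) : Fin.t (S m) -> R :=
  fun i => match i in Fin.t k return (Fin.t (pred k) -> R) -> R with
           | Fin.F1 => fun _ => x
           | Fin.FS j => fun g => g j end g.

Lemma fin_sum_nonneg n (f : Fin.t n -> R) : (forall i, 0 <= f i) -> 0 <= fin_sum n f.
Proof.
  revert f; induction n as [|n IH]; intros f Hf; simpl; [lra|].
  pose proof (Hf Fin.F1). pose proof (IH (fun i => f (Fin.FS i)) (fun i => Hf _)). lra.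
Qed.

Lemma fin_sum_ge_term n (f : Fin.t n -> R) i : (forall j, 0 <= f j) -> f i <= fin_sum n f.
Proof.
  induction i as [n|n i IH]; intros Hf; simpl.
  - pose proof (fin_sum_nonneg n (fun j => f (Fin.FS j)) (fun j => Hf _)). lra.
  - pose proof (IH (fun j => f (Fin.FS j)) (fun j => Hf _)). pose proof (Hf Fin.F1). lra.
Qed.

Lemma fin_sum_zero n (f : Fin.t n -> R) : (forall i, f i = 0) -> fin_sum n f = 0.
Proof. revert f; induction n; intros f H; simpl; auto. rewrite H, IHn; auto; ring. Qed.

Lemma coord_le_euclid_dist n (u v : Rn n) i : Rabs (u i - v i) <= euclid_dist n u v.
Proof.
  unfold euclid_dist. rewrite <- sqrt_Rsqr_abs. apply sqrt_le_1_alt.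
  unfold Rsqr. replace ((u i - v i) * (u i - v i)) with ((u i - v i) ^ 2) by ring.
  apply (fin_sum_ge_term n (fun j => (u j - v j) ^ 2)). intros; apply pow2_ge_0.
Qed.

Lemma Rn2_ext (u v : Rn 2) : u Fin.F1 = v Fin.F1 -> u (Fin.FS Fin.F1) = v (Fin.FS Fin.F1) -> u = v.
Proof.
  intros H1 H2. apply functional_extensionality. intro i.
  apply (Fin.caseS' i); auto. intro p. apply (Fin.caseS' p); auto.
  intro q. apply (Fin.case0 (fun _ => _) q).
Qed.

Section Hemisphere.
Variable m : nat.

Definition bump (a b : R) : R := (1 - a * a) * (1 - b * b).

Definition hemisphere (a b : R) : Rn (S (S (S m))) :=
  vcons a (vcons b (vcons (bump a b) (fun _ => 0))).

Definition lower_hemisphere (a b : R) : Rn (S (S (S m))) :=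
  vcons (-a) (vcons (-b) (vcons (- bump a b) (fun _ => 0))).

Lemma euclid_dist_vcons3 x1 x2 x3 y1 y2 y3 :
  euclid_dist (S (S (S m)))
    (vcons x1 (vcons x2 (vcons x3 (fun _ => 0)))) (vcons y1 (vcons y2 (vcons y3 (fun _ => 0)))) =
  sqrt ((x1 - y1) ^ 2 + ((x2 - y2) ^ 2 + ((x3 - y3) ^ 2 + 0))).
Proof. unfold euclid_dist. simpl. rewrite (fin_sum_zero m); [reflexivity|]. intros; simpl; ring. Qed.

Lemma bump_lipschitz a b a' b' d : in_square a b -> in_square a' b' ->
  Rabs (a' - a) < d -> Rabs (b' - b) < d -> Rabs (bump a b - bump a' b') <= 4 * d.
Proof.
  unfold in_square, bump; intros [Ha Hb] [Ha' Hb'] H1 H2. apply Rabs_lt_inv in H1, H2.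
  assert (Hsq : forall x y, -1 <= x <= 1 -> -1 <= y <= 1 -> -d < y - x < d ->
                 Rabs (x * x - y * y) <= 2 * d).
  { intros x y Hx Hy Hxy. replace (x * x - y * y) with ((x - y) * (x + y)) by ring. rewrite Rabs_mult.
    assert (Rabs (x - y) <= d) by (apply Rabs_le; lra).
    assert (Rabs (x + y) <= 2) by (apply Rabs_le; lra).
    pose proof (Rabs_pos (x - y)); pose proof (Rabs_pos (x + y)). nra. }
  pose proof (Hsq a a' Ha Ha' H1) as Ea. pose proof (Hsq b b' Hb Hb' H2) as Eb.
  replace ((1 - a * a) * (1 - b * b) - (1 - a' * a') * (1 - b' * b'))
    with ((a' * a' - a * a) * (1 - b * b) + (1 - a' * a') * (b' * b' - b * b)) by ring.
  eapply Rle_trans; [apply Rabs_triang|]. rewrite !Rabs_mult.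
  rewrite <- (Rabs_Ropp (a' * a' - a * a)), <- (Rabs_Ropp (b' * b' - b * b)).
  replace (- (a' * a' - a * a)) with (a * a - a' * a') by ring.
  replace (- (b' * b' - b * b)) with (b * b - b' * b') by ring.
  assert (Rabs (1 - b * b) <= 1) by (apply Rabs_le; nra).
  assert (Rabs (1 - a' * a') <= 1) by (apply Rabs_le; nra).
  pose proof (Rabs_pos (1 - b * b)); pose proof (Rabs_pos (1 - a' * a')).
  pose proof (Rabs_pos (a * a - a' * a')); pose proof (Rabs_pos (b * b - b' * b')). nra.
Qed.

Lemma hemispheres_continuous a b : in_square a b -> forall eps, eps > 0 -> exists del, del > 0 /\
  forall a' b', in_square a' b' -> Rabs (a' - a) < del -> Rabs (b' - b) < del ->
    euclid_dist _ (hemisphere a b) (hemisphere a' b') < eps /\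
    euclid_dist _ (lower_hemisphere a b) (lower_hemisphere a' b') < eps.
Proof.
  intros Q eps He. exists (eps/5). split; [lra|]. intros a' b' Q' H1 H2.
  pose proof (Rabs_le_inv _ _ (bump_lipschitz a b a' b' (eps/5) Q Q' H1 H2)) as C.
  apply Rabs_lt_inv in H1, H2.
  assert (Hsqrt : forall x, 0 <= x -> x < eps * eps -> sqrt x < eps).
  { intros. rewrite <- (sqrt_square eps) by lra. apply sqrt_lt_1_alt. lra. }
  unfold hemisphere, lower_hemisphere. rewrite !euclid_dist_vcons3. simpl pow. rewrite !Rmult_1_r.
  assert (C2 : (bump a b - bump a' b') * (bump a b - bump a' b') <= 16 * (eps/5) * (eps/5)) by nra.
  split; apply Hsqrt; try (repeat apply Rplus_le_le_0_compat; first [apply Rle_0_sqr | lra]); nra.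
Qed.

Lemma hemispheres_boundary a b : (a = -1 \/ a = 1 \/ b = -1 \/ b = 1) ->
  hemisphere (-a) (-b) = lower_hemisphere a b /\ lower_hemisphere (-a) (-b) = hemisphere a b.
Proof.
  intros Hb.
  assert (B0 : bump a b = 0) by (unfold bump; destruct Hb as [->|[->|[->| ->]]]; ring).
  assert (B1 : bump (-a) (-b) = 0) by (unfold bump; destruct Hb as [->|[->|[->| ->]]]; ring).
  unfold hemisphere, lower_hemisphere. rewrite B0, B1, Ropp_0, !Ropp_involutive. split; reflexivity.
Qed.

Lemma hemispheres_disjoint a b : hemisphere a b <> lower_hemisphere a b.
Proof.
  intro E.
  pose proof (f_equal (fun g => g Fin.F1) E) as E1.
  pose proof (f_equal (fun g => g (Fin.FS Fin.F1)) E) as E2.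
  pose proof (f_equal (fun g => g (Fin.FS (Fin.FS Fin.F1))) E) as E3.
  unfold hemisphere, lower_hemisphere, bump in E1, E2, E3. simpl in E1, E2, E3.
  assert (a = 0) by lra. assert (b = 0) by lra. subst. lra.
Qed.

Lemma continuous_map_into_plane_not_injective (f : Rn (S (S (S m))) -> Rn 2) :
  continuous_Rn _ 2 f -> ~ (forall x y, f x = f y -> x = y).
Proof.
  intros Hf Hinj.
  set (h i a b := f (hemisphere a b) i - f (lower_hemisphere a b) i).
  destruct (borsuk_ulam_square (h Fin.F1) (h (Fin.FS Fin.F1))) as [a [b [Q [Z1 Z2]]]].
  - intros a b Q eps He.
    destruct (Hf (hemisphere a b) (eps/2) ltac:(lra)) as [d1 [D1 K1]].
    destruct (Hf (lower_hemisphere a b) (eps/2) ltac:(lra)) as [d2 [D2 K2]].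
    destruct (hemispheres_continuous a b Q (Rmin d1 d2) ltac:(apply Rmin_glb_lt; auto)) as [d [D K]].
    exists d; split; auto. intros a' b' Q' H1 H2.
    destruct (K a' b' Q' H1 H2) as [k1 k2].
    pose proof (Rmin_l d1 d2); pose proof (Rmin_r d1 d2).
    specialize (K1 (hemisphere a' b') ltac:(lra)). specialize (K2 (lower_hemisphere a' b') ltac:(lra)).
    assert (Hcoord : forall i, Rabs (h i a' b' - h i a b) < eps).
    { intro i. unfold h.
      pose proof (coord_le_euclid_dist 2 (f (hemisphere a b)) (f (hemisphere a' b')) i) as Eu.
      pose proof (coord_le_euclid_dist 2 (f (lower_hemisphere a b)) (f (lower_hemisphere a' b')) i)
        as El.
      apply Rabs_le_inv in Eu, El. apply Rabs_def1; lra. }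
    split; apply Hcoord.
  - intros a b Q Hb. destruct (hemispheres_boundary a b Hb) as [P1 P2].
    unfold h. rewrite P1, P2. split; ring.
  - apply (hemispheres_disjoint a b), Hinj, Rn2_ext; unfold h in Z1, Z2; lra.
Qed.
End Hemisphere.

(** * Dimension one *)

Definition continuous2_at (g : R -> R -> R) (z1 z2 : R) : Prop :=
  forall eps, eps > 0 -> exists eta, eta > 0 /\
    forall w1 w2, Rabs (w1 - z1) < eta -> Rabs (w2 - z2) < eta -> Rabs (g w1 w2 - g z1 z2) < eps.

Lemma continuity_pt_comp2 (g : R -> R -> R) (u v : R -> R) t :
  continuity_pt u t -> continuity_pt v t -> continuous2_at g (u t) (v t) ->
  continuity_pt (fun s => g (u s) (v s)) t.
Proof.
  intros Hu Hv Hg eps He.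
  destruct (Hg eps He) as [eta [Heta Hnear]].
  destruct (Hu eta Heta) as [du [Hdu Ku]]. destruct (Hv eta Heta) as [dv [Hdv Kv]].
  exists (Rmin du dv). split; [apply Rmin_glb_lt; auto|].
  intros s [Hs Hst]. simpl in *. unfold Rdist in *. apply Hnear.
  - apply Ku. split; auto. eapply Rlt_le_trans; [exact Hst|apply Rmin_l].
  - apply Kv. split; auto. eapply Rlt_le_trans; [exact Hst|apply Rmin_r].
Qed.

Section LineOntoPlane.
Variables F1 F2 : R -> R.
Hypothesis F1_continuous : continuity F1.
Hypothesis F2_continuous : continuity F2.
Hypothesis F_injective : forall x y, F1 x = F1 y -> F2 x = F2 y -> x = y.
Hypothesis F_surjective : forall p1 p2, exists x, F1 x = p1 /\ F2 x = p2.

Lemma arc_separated_from_point a b p1 p2 : (forall x, a <= x <= b -> ~ (F1 x = p1 /\ F2 x = p2)) ->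
  exists e, e > 0 /\ forall x, a <= x <= b -> Rabs (F1 x - p1) >= e \/ Rabs (F2 x - p2) >= e.
Proof.
  intros Hn. destruct (Rle_dec a b) as [Hab|Hab]; [| exists 1; split; [lra| intros; lra]].
  set (D x := (F1 x - p1) * (F1 x - p1) + (F2 x - p2) * (F2 x - p2)).
  assert (DC : forall c, a <= c <= b -> continuity_pt D c) by (intros; unfold D; reg).
  destruct (continuity_ab_min D a b Hab DC) as [xm [Hmin Hxm]].
  assert (Dpos : D xm > 0).
  { unfold D. pose proof (Rle_0_sqr (F1 xm - p1)); pose proof (Rle_0_sqr (F2 xm - p2)).
    destruct (Req_dec (F1 xm) p1) as [e1|e1]; [destruct (Req_dec (F2 xm) p2) as [e2|e2]|].
    - exfalso; apply (Hn xm Hxm); auto.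
    - pose proof (Rsqr_pos_lt (F2 xm - p2) ltac:(lra)). unfold Rsqr in *. lra.
    - pose proof (Rsqr_pos_lt (F1 xm - p1) ltac:(lra)). unfold Rsqr in *. lra. }
  set (e := Rmin 1 (D xm / 4)).
  assert (He1 : e <= 1) by apply Rmin_l. assert (He2 : e <= D xm / 4) by apply Rmin_r.
  exists e. split; [apply Rmin_glb_lt; lra|].
  intros x Hx. specialize (Hmin x Hx). unfold D in Hmin, He2.
  destruct (Rle_dec e (Rabs (F1 x - p1))) as [h|h]; [left; lra|].
  destruct (Rle_dec e (Rabs (F2 x - p2))) as [h'|h']; [right; lra|].
  exfalso. apply Rnot_le_lt, Rabs_lt_inv in h, h'. nra.
Qed.

Definition in_arc (k z1 z2 : R) : Prop := exists x, -k <= x <= k /\ F1 x = z1 /\ F2 x = z2.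

Lemma arc_inverse_continuous k x0 eps : -k <= x0 <= k -> eps > 0 -> exists eta, eta > 0 /\
  forall x, -k <= x <= k -> Rabs (F1 x - F1 x0) < eta -> Rabs (F2 x - F2 x0) < eta ->
    Rabs (x - x0) < eps.
Proof.
  intros Hx0 He.
  destruct (arc_separated_from_point (-k) (x0 - eps) (F1 x0) (F2 x0)) as [e1 [E1 K1]].
  { intros x Hx [h1 h2]. pose proof (F_injective _ _ h1 h2). lra. }
  destruct (arc_separated_from_point (x0 + eps) k (F1 x0) (F2 x0)) as [e2 [E2 K2]].
  { intros x Hx [h1 h2]. pose proof (F_injective _ _ h1 h2). lra. }
  exists (Rmin e1 e2). split; [apply Rmin_glb_lt; auto|].
  intros x Hx h1 h2. pose proof (Rmin_l e1 e2); pose proof (Rmin_r e1 e2).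
  destruct (Rlt_dec (Rabs (x - x0)) eps) as [ok|nok]; auto. exfalso.
  apply Rnot_lt_le in nok. unfold Rabs in nok; destruct (Rcase_abs (x - x0)).
  - destruct (K1 x ltac:(lra)); lra.
  - destruct (K2 x ltac:(lra)); lra.
Qed.

Definition F_inv (p1 p2 : R) : R :=
  proj1_sig (constructive_indefinite_description _ (F_surjective p1 p2)).

Lemma F_F_inv p1 p2 : F1 (F_inv p1 p2) = p1 /\ F2 (F_inv p1 p2) = p2.
Proof. unfold F_inv. destruct constructive_indefinite_description; simpl; auto. Qed.

Lemma F_inv_F x : F_inv (F1 x) (F2 x) = x.
Proof. destruct (F_F_inv (F1 x) (F2 x)). apply F_injective; auto. Qed.

Lemma F_inv_in_arc k z1 z2 : in_arc k z1 z2 -> -k <= F_inv z1 z2 <= k.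
Proof. intros [x [Hx [<- <-]]]. rewrite F_inv_F. auto. Qed.

Definition square_in_arc (k c1 c2 r : R) : Prop :=
  forall z1 z2, Rabs (z1 - c1) < r -> Rabs (z2 - c2) < r -> in_arc k z1 z2.

Lemma F_inv_continuous_in_square k c1 c2 r z1 z2 : square_in_arc k c1 c2 r ->
  Rabs (z1 - c1) < r -> Rabs (z2 - c2) < r -> continuous2_at F_inv z1 z2.
Proof.
  intros Hsq Hz1 Hz2 eps He.
  destruct (arc_inverse_continuous k (F_inv z1 z2) eps (F_inv_in_arc k z1 z2 (Hsq z1 z2 Hz1 Hz2)) He)
    as [eta [Heta Hnear]].
  exists (Rmin eta (Rmin (r - Rabs (z1 - c1)) (r - Rabs (z2 - c2)))).
  split; [repeat apply Rmin_glb_lt; lra|].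
  intros w1 w2 Hw1 Hw2.
  pose proof (Rmin_l eta (Rmin (r - Rabs (z1 - c1)) (r - Rabs (z2 - c2)))) as m1.
  pose proof (Rmin_r eta (Rmin (r - Rabs (z1 - c1)) (r - Rabs (z2 - c2)))) as m2.
  pose proof (Rmin_l (r - Rabs (z1 - c1)) (r - Rabs (z2 - c2))) as m3.
  pose proof (Rmin_r (r - Rabs (z1 - c1)) (r - Rabs (z2 - c2))) as m4.
  assert (Hw : in_arc k w1 w2).
  { apply Hsq; [replace (w1 - c1) with ((w1 - z1) + (z1 - c1)) by ring
               |replace (w2 - c2) with ((w2 - z2) + (z2 - c2)) by ring];
    eapply Rle_lt_trans; try apply Rabs_triang; lra. }
  destruct (F_F_inv w1 w2) as [e1 e2]. destruct (F_F_inv z1 z2) as [e3 e4].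
  apply Hnear; [apply F_inv_in_arc; auto| rewrite e1, e3 | rewrite e2, e4]; lra.
Qed.

Lemma no_square_in_arc k c1 c2 r : r > 0 -> ~ square_in_arc k c1 c2 r.
Proof.
  intros Hr Hsq. set (rho := r / 2).
  assert (Hcircle : forall t, Rabs (rho * cos t) < r /\ Rabs (rho * sin t) < r).
  { intro t. pose proof (COS_bound t); pose proof (SIN_bound t).
    rewrite !Rabs_mult, (Rabs_right rho) by (unfold rho; lra).
    assert (Rabs (cos t) <= 1) by (apply Rabs_le; lra).
    assert (Rabs (sin t) <= 1) by (apply Rabs_le; lra).
    pose proof (Rabs_pos (cos t)); pose proof (Rabs_pos (sin t)). unfold rho; split; nra. }
  set (phi t := F_inv (c1 + rho * cos t) (c2 + rho * sin t)
                - F_inv (c1 - rho * cos t) (c2 - rho * sin t)).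
  assert (Hphi : continuity phi).
  { intro t. destruct (Hcircle t) as [Hcos Hsin].
    apply continuity_pt_minus; apply continuity_pt_comp2; try reg;
      eapply F_inv_continuous_in_square; eauto;
      [replace (c1 + rho * cos t - c1) with (rho * cos t) by ring
      |replace (c2 + rho * sin t - c2) with (rho * sin t) by ring
      |replace (c1 - rho * cos t - c1) with (- (rho * cos t)) by ring
      |replace (c2 - rho * sin t - c2) with (- (rho * sin t)) by ring];
      rewrite ?Rabs_Ropp; auto. }
  assert (Hsign : phi 0 * phi PI <= 0).
  { assert (phi PI = - phi 0).
    { unfold phi. rewrite cos_0, sin_0, cos_PI, sin_PI, !Rmult_0_r, !Rmult_1_r.
      replace (c1 + rho * -1) with (c1 - rho) by ring. replace (c1 - rho * -1) with (c1 + rho) by ring.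
      rewrite Rplus_0_r, Rminus_0_r. ring. }
    nra. }
  destruct (IVT_cor phi 0 PI Hphi (Rlt_le _ _ PI_RGT_0) Hsign) as [t [_ Ht]].
  unfold phi in Ht.
  destruct (F_F_inv (c1 + rho * cos t) (c2 + rho * sin t)) as [e1 e2].
  destruct (F_F_inv (c1 - rho * cos t) (c2 - rho * sin t)) as [e3 e4].
  replace (F_inv (c1 + rho * cos t) (c2 + rho * sin t))
    with (F_inv (c1 - rho * cos t) (c2 - rho * sin t))
    in e1, e2 by lra.
  rewrite e1 in e3. rewrite e2 in e4.
  pose proof (sin2_cos2 t). unfold Rsqr in *.
  assert (cos t = 0) by (unfold rho in e3; nra). assert (sin t = 0) by (unfold rho in e4; nra).
  nra.
Qed.

Lemma square_in_some_arc : exists (k : nat) c1 c2 r, r > 0 /\ square_in_arc (INR k) c1 c2 r.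
Proof.
  apply NNPP; intro Hno.
  set (Bad (k : nat) (c1 c2 r : R) := match k with
    | O => True
    | S k => forall z1 z2, Rabs (z1 - c1) <= r -> Rabs (z2 - c2) <= r -> ~ in_arc (INR k) z1 z2 end).
  destruct (shrinking_squares_common_point Bad 0 0 1 ltac:(lra) I) as [p1 [p2 [_ [_ Hp]]]].
  - intros k c1 c2 r Hr _.
    assert (Hout : exists z1 z2, Rabs (z1 - c1) < r /\ Rabs (z2 - c2) < r /\ ~ in_arc (INR k) z1 z2).
    { apply NNPP; intro H. apply Hno. exists k, c1, c2, r. split; auto.
      intros z1 z2 Hz1 Hz2. apply NNPP; intro Hz. apply H. exists z1, z2. auto. }
    destruct Hout as [z1 [z2 [Hz1 [Hz2 Hz]]]].
    destruct (arc_separated_from_point (- INR k) (INR k) z1 z2) as [e [He Hsep]].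
    { intros x Hx [e1 e2]. apply Hz. exists x. auto. }
    set (r' := Rmin (e / 2) (Rmin ((r - Rabs (z1 - c1)) / 2) ((r - Rabs (z2 - c2)) / 2))).
    assert (r1 : r' <= e / 2) by apply Rmin_l.
    assert (r2 : r' <= (r - Rabs (z1 - c1)) / 2) by (eapply Rle_trans; [apply Rmin_r| apply Rmin_l]).
    assert (r3 : r' <= (r - Rabs (z2 - c2)) / 2) by (eapply Rle_trans; [apply Rmin_r| apply Rmin_r]).
    assert (r0 : r' > 0) by (unfold r'; repeat apply Rmin_glb_lt; lra).
    exists z1, z2, r'. pose proof (Rabs_pos (z1 - c1)).
    split; [lra|split; [lra|split; [lra|]]].
    intros w1 w2 Hw1 Hw2 [x [Hx [e1 e2]]]. subst w1 w2.
    destruct (Hsep x Hx); lra.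
  - destruct (F_surjective p1 p2) as [x [e1 e2]].
    destruct (INR_unbounded (Rabs x)) as [k Hk].
    destruct (Hp (S k)) as [c1 [c2 [r [Hbad [_ [Hp1 Hp2]]]]]].
    apply (Hbad p1 p2 Hp1 Hp2). exists x. split; [|auto].
    apply Rabs_le_inv. lra.
Qed.

Lemma no_continuous_bijection_R_onto_R2 : False.
Proof.
  destruct square_in_some_arc as [k [c1 [c2 [r [Hr Hsq]]]]].
  exact (no_square_in_arc _ _ _ _ Hr Hsq).
Qed.
End LineOntoPlane.

Lemma Rn1_ext (u : Rn 1) : u = (fun _ => u Fin.F1).
Proof.
  apply functional_extensionality. intro i.
  apply (Fin.caseS' i); auto. intro q. apply (Fin.case0 (fun _ => _) q).
Qed.

Lemma euclid_dist1 x y : euclid_dist 1 (fun _ => x) (fun _ => y) = Rabs (x - y).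
Proof. unfold euclid_dist. simpl. rewrite Rplus_0_r, Rmult_1_r. apply sqrt_Rsqr_abs. Qed.

Lemma continuous_Rn1_coord m (f : Rn 1 -> Rn m) i :
  continuous_Rn 1 m f -> continuity (fun x => f (fun _ => x) i).
Proof.
  intros Hf x eps He. destruct (Hf (fun _ => x) eps He) as [d [Hd Hnear]].
  exists d. split; auto. intros y [_ Hy]. simpl in *. unfold Rdist in *.
  rewrite Rabs_minus_sym, <- euclid_dist1 in Hy.
  eapply Rle_lt_trans; [|exact (Hnear _ Hy)].
  rewrite Rabs_minus_sym. apply coord_le_euclid_dist.
Qed.

Theorem theorem4 (n : nat) (hn : (0 < n)%nat) (hn2 : n <> 2%nat) :
  ~ exists f : Rn n -> Rn 2, continuous_Rn n 2 f /\ bijective_map f.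
Proof.
  intros [f [Hcont [Hinj Hsurj]]].
  destruct n as [|[|[|m]]]; [lia| |lia|].
  - apply (no_continuous_bijection_R_onto_R2
             (fun x => f (fun _ => x) Fin.F1) (fun x => f (fun _ => x) (Fin.FS Fin.F1)));
      try (apply continuous_Rn1_coord; exact Hcont).
    + intros x y e1 e2.
      exact (f_equal (fun u => u Fin.F1) (Hinj _ _ (Rn2_ext _ _ e1 e2))).
    + intros p1 p2. destruct (Hsurj (vcons p1 (vcons p2 (fun _ => 0)))) as [u Hu].
      exists (u Fin.F1). rewrite <- Rn1_ext, Hu. split; reflexivity.
  - exact (continuous_map_into_plane_not_injective m f Hcont Hinj).
Qed.
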